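(* For an integer $k \geq -1$ and real $b \geq 0$ define \[ J_k = J_k(b) = \int_{-1}^{1} (1-x^2)^{k/2} e^{bx}\, \mathrm{d}x. \] Then for every integer $d \geq 2$ and every $b \geq 0$: (a) $b^2 J_{d+1} = -d(d+1) J_{d-1} + (d+1)(d-1) J_{d-3}$; (b) $\dfrac{J_{d-3}}{J_{d-1}} \geq \dfrac{d}{d-1}\left(\dfrac12 + \sqrt{\dfrac14 + \dfrac{b^2}{d(d+2)}}\right)$; (c) $\dfrac{J_{d-1}}{J_{d+1}} \leq \dfrac{d+2}{d+1}\left(\dfrac12 + \sqrt{\dfrac14 + \dfrac{b^2}{d(d+2)}}\right)$; (d) $J_{d+1} J_{d-3} \geq J_{d-1}^2 \dfrac{d(d+1)}{(d-1)(d+2)}$. *)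

From Stdlib Require Import Reals ClassicalEpsilon.
Open Scope R_scope.

(* Integrand (1 - x^2)^(k/2) * e^(b x); only evaluated for -1 < x < 1,
   where 1 - x^2 > 0, so Rpower is the genuine real power. *)
Definition J_integrand (k : Z) (b : R) (x : R) : R :=
  Rpower (1 - x ^ 2) (IZR k / 2) * exp (b * x).

Definition improper_int_m1_1 (f : R -> R) (L : R) : Prop :=
  exists F : R -> R,
    (forall e, 0 < e < 1 ->
       exists pr : Riemann_integrable f (-1 + e) (1 - e), RiemannInt pr = F e)
    /\ limit1_in F (fun e => 0 < e < 1) L 0.

(* J_k(b) = \int_{-1}^{1} (1-x^2)^{k/2} e^{bx} dx  (the value of the
   improper integral; it exists for k >= -1). *)
Definition J (k : Z) (b : R) : R :=
  epsilon (inhabits 0) (fun L => improper_int_m1_1 (J_integrand k b) L).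

From Stdlib Require Import Reals ZArith Lra Lia Psatz Nsatz ClassicalEpsilon.
From Coquelicot Require Import Coquelicot.
Open Scope R_scope.

(* Substituting [x = sin t] gives [J_(p-1)(b) = I_p(b)], where
   [I_p(b) = Icos p b = \int_{-PI/2}^{PI/2} cos^p t e^(b sin t) dt].  Differentiating
   [(b cos^(p+3) t + (p+3) sin t cos^(p+1) t) e^(b sin t)] yields the recurrence (a), and
   differentiating under the integral sign followed by an integration by parts gives
   [I_p' = b I_(p+2) / (p+1)].  Hence [q = I_n / I_(n+2)] obeys a Riccati-type equation; the
   claimed lower bound (b) equals [q] at [b = 0], and wherever [q] would drop below it, [q]
   grows faster than the bound, so it never does.  By the recurrence, [I_(n+4) I_n / I_(n+2)^2]
   is an increasing quadratic function of [q], which turns (b) into (d); feeding (d) back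
   into the recurrence bounds the next ratio and gives (c). *)

Definition cosexp (n : nat) (b t : R) : R := cos t ^ n * exp (b * sin t).

Definition Icos (n : nat) (b : R) : R := RInt (cosexp n b) (-(PI/2)) (PI/2).

Lemma continuous_cosexp n b t : continuous (cosexp n b) t.
Proof.
  apply (ex_derive_continuous (K := R_AbsRing) (V := R_NormedModule)).
  unfold cosexp; auto_derive; auto.
Qed.

Lemma ex_RInt_cosexp n b u v : ex_RInt (cosexp n b) u v.
Proof.
  apply (ex_RInt_continuous (V := R_CompleteNormedModule)); intros.
  apply continuous_cosexp.
Qed.

Lemma is_RInt_Icos n b : is_RInt (cosexp n b) (-(PI/2)) (PI/2) (Icos n b).
Proof. apply (RInt_correct (V := R_CompleteNormedModule)), ex_RInt_cosexp. Qed.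

Lemma Icos_pos n b : 0 < Icos n b.
Proof.
  apply RInt_gt_0; [pose proof PI_RGT_0; lra| |intros; apply continuous_cosexp].
  intros t Ht; apply Rmult_lt_0_compat; [apply pow_lt, cos_gt_0; lra | apply exp_pos].
Qed.

Lemma cos_half_pi_opp : cos (-(PI/2)) = 0.
Proof. rewrite cos_neg; apply cos_PI2. Qed.

Lemma Icos_rec n b :
  b ^ 2 * Icos (n + 4) b
  = - ((INR n + 2) * (INR n + 3)) * Icos (n + 2) b
    + (INR n + 3) * (INR n + 1) * Icos n b.
Proof.
  set (N := INR n).
  set (Psi := fun t => (b * cos t ^ (n + 3) + (N + 3) * sin t * cos t ^ (n + 1))
                       * exp (b * sin t)).
  set (F := fun t => b ^ 2 * cosexp (n + 4) b t + (N + 2) * (N + 3) * cosexp (n + 2) b t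
                     - (N + 3) * (N + 1) * cosexp n b t).
  assert (Hderiv : is_RInt F (-(PI/2)) (PI/2) (minus (Psi (PI/2)) (Psi (-(PI/2))))).
  { apply (is_RInt_derive (V := R_CompleteNormedModule)).
    - intros t _; unfold Psi, F, cosexp, N; auto_derive; auto.
      replace (Nat.pred (n + 3)) with (n + 2)%nat by lia.
      replace (Nat.pred (n + 1)) with n by lia.
      rewrite !pow_add, !plus_INR.
      pose proof (sin2_cos2 t) as Hpyth; unfold Rsqr in Hpyth.
      replace (INR 3) with 3 by (simpl; ring); replace (INR 1) with 1 by reflexivity.
      cbn [pow]; nsatz.
    - intros; unfold F.
      apply (ex_derive_continuous (K := R_AbsRing) (V := R_NormedModule)).
      unfold cosexp; auto_derive; auto. }
  assert (Hlin : is_RInt F (-(PI/2)) (PI/2)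
     (b ^ 2 * Icos (n + 4) b + (N + 2) * (N + 3) * Icos (n + 2) b
      - (N + 3) * (N + 1) * Icos n b)).
  { apply (is_RInt_minus (V := R_NormedModule)); [apply (is_RInt_plus (V := R_NormedModule))|].
    all: apply (is_RInt_scal (V := R_NormedModule)); apply is_RInt_Icos. }
  pose proof (is_RInt_unique _ _ _ _ Hderiv) as Hint.
  rewrite (is_RInt_unique _ _ _ _ Hlin) in Hint.
  unfold Psi in Hint; rewrite cos_PI2, cos_half_pi_opp, !pow_add in Hint.
  unfold minus, plus, opp in Hint; simpl in Hint.
  lra.
Qed.

Definition sincosexp (n : nat) (b t : R) : R := cos t ^ n * sin t * exp (b * sin t).

Lemma is_derive_cosexp_param n b t : is_derive (fun u => cosexp n u t) b (sincosexp n b t).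
Proof. unfold cosexp, sincosexp; auto_derive; auto; ring. Qed.

Lemma continuous_sincosexp n b t : continuous (sincosexp n b) t.
Proof.
  apply (ex_derive_continuous (K := R_AbsRing) (V := R_NormedModule)).
  unfold sincosexp; auto_derive; auto.
Qed.

Lemma RInt_sincosexp n b :
  RInt (sincosexp n b) (-(PI/2)) (PI/2) = b * Icos (n + 2) b / (INR n + 1).
Proof.
  set (S := RInt (sincosexp n b) (-(PI/2)) (PI/2)).
  set (Psi := fun t => cos t ^ (n + 1) * exp (b * sin t)).
  set (F := fun t => b * cosexp (n + 2) b t - (INR n + 1) * sincosexp n b t).
  assert (Hderiv : is_RInt F (-(PI/2)) (PI/2) (minus (Psi (PI/2)) (Psi (-(PI/2))))).
  { apply (is_RInt_derive (V := R_CompleteNormedModule)).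
    - intros t _; unfold Psi, F, cosexp, sincosexp; auto_derive; auto.
      replace (Nat.pred (n + 1)) with n by lia.
      rewrite !pow_add, !plus_INR; simpl; ring.
    - intros; unfold F.
      apply (ex_derive_continuous (K := R_AbsRing) (V := R_NormedModule)).
      unfold cosexp, sincosexp; auto_derive; auto. }
  assert (Hlin : is_RInt F (-(PI/2)) (PI/2) (b * Icos (n + 2) b - (INR n + 1) * S)).
  { apply (is_RInt_minus (V := R_NormedModule));
      apply (is_RInt_scal (V := R_NormedModule)); [apply is_RInt_Icos|].
    apply (RInt_correct (V := R_CompleteNormedModule)).
    apply (ex_RInt_continuous (V := R_CompleteNormedModule)); intros.
    apply continuous_sincosexp. }
  pose proof (is_RInt_unique _ _ _ _ Hderiv) as Hint.
  rewrite (is_RInt_unique _ _ _ _ Hlin) in Hint.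
  unfold Psi in Hint; rewrite cos_PI2, cos_half_pi_opp, pow_i in Hint by lia.
  unfold minus, plus, opp in Hint; simpl in Hint.
  pose proof (pos_INR n).
  apply (Rmult_eq_reg_l (INR n + 1)); [|lra].
  field_simplify; lra.
Qed.

Lemma is_derive_Icos n b : is_derive (Icos n) b (b * Icos (n + 2) b / (INR n + 1)).
Proof.
  rewrite <- RInt_sincosexp.
  assert (Hparam : is_derive (fun u => RInt (fun t => cosexp n u t) (-(PI/2)) (PI/2)) b
             (RInt (fun t => Derive (fun u => cosexp n u t) b) (-(PI/2)) (PI/2))).
  { apply (is_derive_RInt_param (fun u t => cosexp n u t)).
    - apply filter_forall; intros u t _; eexists; apply is_derive_cosexp_param.
    - intros t _.
      apply (continuity_2d_pt_ext (fun u v => sincosexp n u v)).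
      { intros u v; symmetry; apply is_derive_unique, is_derive_cosexp_param. }
      assert (Hpt : forall f x, ex_derive f x -> continuity_pt f x).
      { intros f x Hf; apply continuity_pt_filterlim.
        apply (ex_derive_continuous (K := R_AbsRing) (V := R_NormedModule)); auto. }
      assert (Hsin : continuity_2d_pt (fun _ v => sin v) b t).
      { apply (continuity_1d_2d_pt_comp sin (fun _ v => v));
          [apply Hpt; auto_derive; auto | apply continuity_2d_pt_id2]. }
      unfold sincosexp; repeat apply continuity_2d_pt_mult; auto.
      + apply (continuity_1d_2d_pt_comp (fun x => cos x ^ n) (fun _ v => v));
          [apply Hpt; auto_derive; auto | apply continuity_2d_pt_id2].
      + apply (continuity_1d_2d_pt_comp exp (fun u v => u * sin v));
          [apply Hpt; auto_derive; auto|].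
        apply continuity_2d_pt_mult; auto; apply continuity_2d_pt_id1.
    - apply filter_forall; intros; apply ex_RInt_cosexp. }
  erewrite RInt_ext in Hparam; [exact Hparam|].
  intros t _; apply is_derive_unique, is_derive_cosexp_param.
Qed.

(* At a negative minimum on [[0, b]], [h] would still be decreasing from the left. *)
Lemma nonneg_of_deriv_pos_where_neg (h : R -> R) :
  h 0 = 0 -> (forall x, continuity_pt h x) ->
  (forall x, 0 < x -> h x < 0 -> exists l, is_derive h x l /\ 0 < l) ->
  forall b, 0 <= b -> 0 <= h b.
Proof.
  intros h0 hcont hderiv b hb.
  destruct (Rle_or_lt 0 (h b)) as [|hneg]; [assumption|exfalso].
  assert (bpos : 0 < b) by (destruct hb as [|<-]; lra).
  destruct (continuity_ab_min h 0 b) as [m [hmin hm]]; [lra|intros; apply hcont|].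
  assert (hmneg : h m < 0) by (specialize (hmin b); lra).
  assert (mpos : 0 < m) by (destruct hm as [[|<-] _]; lra).
  destruct (hderiv m mpos hmneg) as [l [hl lpos]].
  apply is_derive_Reals in hl.
  destruct (hl l lpos) as [delta hdelta]; pose proof (cond_pos delta).
  pose proof (Rmin_l (delta / 2) (m / 2)); pose proof (Rmin_r (delta / 2) (m / 2)).
  set (e := Rmin (delta / 2) (m / 2)) in *.
  assert (epos : 0 < e) by (apply Rmin_pos; lra).
  assert (hquot : Rabs ((h (m + - e) - h m) / - e - l) < l).
  { apply hdelta; [lra|]; rewrite Rabs_Ropp, Rabs_pos_eq; lra. }
  apply Rabs_def2 in hquot as [_ hquot].
  set (q := (h (m + - e) - h m) / - e) in hquot.
  assert (h (m + - e) - h m = q * - e) by (unfold q; field; lra).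
  specialize (hmin (m + - e)); nra.
Qed.

Definition ratio_root (N b : R) : R := / 2 + sqrt (/ 4 + b ^ 2 / ((N + 2) * (N + 4))).

Section RatioRoot.
Variables (N b : R).
Hypothesis HN : 0 <= N.

Let sqrt_arg_ge : / 4 <= / 4 + b ^ 2 / ((N + 2) * (N + 4)).
Proof. assert (0 <= b ^ 2 / ((N + 2) * (N + 4))) by (apply Rdiv_le_0_compat; nra). lra. Qed.

Lemma ratio_root_ge1 : 1 <= ratio_root N b.
Proof.
  assert (sqrt (/ 4) = / 2) by (rewrite <- (sqrt_pow2 (/ 2)) by lra; f_equal; field).
  pose proof (sqrt_le_1_alt _ _ sqrt_arg_ge); unfold ratio_root; lra.
Qed.

Lemma ratio_root_eq :
  ratio_root N b ^ 2 - ratio_root N b = b ^ 2 / ((N + 2) * (N + 4)).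
Proof.
  unfold ratio_root.
  pose proof (Rsqr_sqrt (/ 4 + b ^ 2 / ((N + 2) * (N + 4))) ltac:(lra)).
  unfold Rsqr in *; nra.
Qed.

Lemma is_derive_ratio_root :
  is_derive (ratio_root N) b (2 * b / ((N + 2) * (N + 4) * (2 * ratio_root N b - 1))).
Proof.
  unfold ratio_root; pose proof (sqrt_lt_R0 (/ 4 + b ^ 2 / ((N + 2) * (N + 4))) ltac:(lra)).
  auto_derive; [lra|].
  unfold Rdiv in *; set (S := sqrt _) in *.
  match goal with |- ?x = ?y => change (@eq R x y) end.
  field; repeat split; lra.
Qed.

End RatioRoot.

Lemma ratio_root_0 N : 0 <= N -> ratio_root N 0 = 1.
Proof.
  intros HN; unfold ratio_root.
  replace (/ 4 + 0 ^ 2 / ((N + 2) * (N + 4))) with ((/ 2) ^ 2) by (field; lra).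
  rewrite sqrt_pow2; lra.
Qed.

(* [A], [B], [C] stand for [Icos n b], [Icos (n+2) b], [Icos (n+4) b], and [N] for [INR n]. *)
Section RatioAlgebra.
Variables (N b A B C : R).
Hypotheses (HN : 0 <= N) (hb : 0 < b) (HA : 0 < A) (HB : 0 < B) (HC : 0 < C).
Hypothesis Hrec : b ^ 2 * C = - ((N + 2) * (N + 3)) * B + (N + 3) * (N + 1) * A.

Let s := ratio_root N b.
Let Q := (N + 2) / (N + 1) * s.
Let P (q : R) : R := q * ((N + 1) * q - (N + 2)).

Let turan_quotient : C * A = B ^ 2 * ((N + 3) * P (A / B) / b ^ 2).
Proof.
  assert (HCrec : C = (N + 3) * ((N + 1) * A - (N + 2) * B) / b ^ 2).
  { apply (Rmult_eq_reg_l (b ^ 2)); [rewrite Hrec; field|]; nra. }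
  rewrite HCrec; unfold P; field; lra.
Qed.

Let P_Q : P Q = (N + 2) * b ^ 2 / ((N + 1) * (N + 4)).
Proof.
  unfold P, Q.
  replace (_ * _) with ((N + 2) ^ 2 / (N + 1) * (s ^ 2 - s)) by (field; lra).
  unfold s; rewrite ratio_root_eq by lra; field; lra.
Qed.

Let P_lt q q' : 0 < q -> (N + 2) / (N + 1) <= q' -> q < q' -> P q < P q'.
Proof.
  intros hq hq' hlt.
  assert (N + 2 <= (N + 1) * q').
  { replace (N + 2) with ((N + 1) * ((N + 2) / (N + 1))) by (field; lra).
    apply Rmult_le_compat_l; lra. }
  assert (0 < (q' - q) * ((N + 1) * q + ((N + 1) * q' - (N + 2))))
    by (apply Rmult_lt_0_compat; nra).
  unfold P; nra.
Qed.

Let Q_ge : (N + 2) / (N + 1) <= Q.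
Proof.
  pose proof (ratio_root_ge1 N b HN) as hs; fold s in hs.
  assert (0 < (N + 2) / (N + 1)) by (apply Rdiv_lt_0_compat; lra).
  unfold Q; nra.
Qed.

(* [b * B / (N+1)] and [b * C / (N+3)] are the derivatives of [A] and [B]
   (see [is_derive_Icos]), so the right-hand side is the derivative of [A / B]. *)
Lemma ratio_deriv_gt : A / B < Q ->
  (N + 2) / (N + 1) * (2 * b / ((N + 2) * (N + 4) * (2 * s - 1)))
  < (b * B / (N + 1) * B - A * (b * C / (N + 3))) / B ^ 2.
Proof.
  intros hq.
  pose proof (ratio_root_ge1 N b HN) as hs; fold s in hs.
  assert (Hrhs : (b * B / (N + 1) * B - A * (b * C / (N + 3))) / B ^ 2
                 = (b ^ 2 / (N + 1) - P (A / B)) / b).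
  { replace (A * (b * C / (N + 3))) with (b * (C * A) / (N + 3)) by (field; lra).
    rewrite turan_quotient; field; repeat split; lra. }
  assert (Hlhs : (N + 2) / (N + 1) * (2 * b / ((N + 2) * (N + 4) * (2 * s - 1)))
                 <= (b ^ 2 / (N + 1) - P Q) / b).
  { rewrite P_Q.
    replace ((b ^ 2 / (N + 1) - (N + 2) * b ^ 2 / ((N + 1) * (N + 4))) / b)
      with (2 * b / ((N + 1) * (N + 4))) by (field; repeat split; lra).
    replace ((N + 2) / (N + 1) * (2 * b / ((N + 2) * (N + 4) * (2 * s - 1))))
      with (2 * b / ((N + 1) * (N + 4)) * / (2 * s - 1)) by (field; repeat split; lra).
    assert (0 < 2 * b / ((N + 1) * (N + 4))) by (apply Rdiv_lt_0_compat; nra).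
    assert (/ (2 * s - 1) <= 1) by (rewrite <- Rinv_1; apply Rinv_le_contravar; lra).
    nra. }
  assert (P (A / B) < P Q) by (apply P_lt; auto; apply Rdiv_lt_0_compat; lra).
  rewrite Hrhs; eapply Rle_lt_trans; [exact Hlhs|].
  apply Rmult_lt_compat_r; [apply Rinv_0_lt_compat|]; lra.
Qed.

Lemma turan_of_ratio_ge : Q <= A / B ->
  C * A >= B ^ 2 * ((N + 2) * (N + 3) / ((N + 1) * (N + 4))).
Proof.
  intros hq.
  assert (P Q <= P (A / B)).
  { assert (0 < (N + 2) / (N + 1)) by (apply Rdiv_lt_0_compat; lra).
    destruct hq as [hlt|<-]; [left; apply P_lt; lra | lra]. }
  rewrite turan_quotient.
  replace ((N + 2) * (N + 3) / ((N + 1) * (N + 4))) with ((N + 3) * P Q / b ^ 2)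
    by (rewrite P_Q; field; repeat split; lra).
  apply Rle_ge, Rmult_le_compat_l; [nra|].
  unfold Rdiv; apply Rmult_le_compat_r; [apply Rlt_le, Rinv_0_lt_compat; nra|nra].
Qed.

Lemma ratio_le_of_turan :
  C * A >= B ^ 2 * ((N + 2) * (N + 3) / ((N + 1) * (N + 4))) ->
  B / C <= (N + 4) / (N + 3) * s.
Proof.
  intros ht.
  pose proof (ratio_root_ge1 N b HN) as hs; fold s in hs.
  pose proof (ratio_root_eq N b HN) as hs2; fold s in hs2.
  set (u := B / C * ((N + 3) / (N + 4))).
  assert (hAC : A / C >= (B / C) ^ 2 * ((N + 2) * (N + 3) / ((N + 1) * (N + 4)))).
  { set (K := (N + 2) * (N + 3) / ((N + 1) * (N + 4))) in *.
    replace (A / C) with (C * A * / C ^ 2) by (field; lra).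
    replace ((B / C) ^ 2 * K) with (B ^ 2 * K * / C ^ 2) by (field; lra).
    apply Rle_ge, Rmult_le_compat_r; [apply Rlt_le, Rinv_0_lt_compat; nra | lra]. }
  assert (hb2 : b ^ 2 = - ((N + 2) * (N + 3)) * (B / C) + (N + 3) * (N + 1) * (A / C)).
  { apply (Rmult_eq_reg_r C); [rewrite Hrec; field|]; lra. }
  assert (hu : u ^ 2 - u <= s ^ 2 - s).
  { rewrite hs2; apply (Rmult_le_reg_l ((N + 2) * (N + 4))); [nra|].
    replace ((N + 2) * (N + 4) * (b ^ 2 / ((N + 2) * (N + 4)))) with (b ^ 2) by (field; lra).
    replace ((N + 2) * (N + 4) * (u ^ 2 - u)) with
      (- ((N + 2) * (N + 3)) * (B / C)
       + (N + 3) * (N + 1) * ((B / C) ^ 2 * ((N + 2) * (N + 3) / ((N + 1) * (N + 4)))))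
      by (unfold u; field; lra).
    rewrite hb2; apply Rplus_le_compat_l, Rmult_le_compat_l; nra. }
  assert (u <= s) by nra.
  replace (B / C) with (u * ((N + 4) / (N + 3))) by (unfold u; field; lra).
  assert (0 < (N + 4) / (N + 3)) by (apply Rdiv_lt_0_compat; lra).
  nra.
Qed.

End RatioAlgebra.

Lemma INR_add_2 n : INR (n + 2) = INR n + 2.
Proof. rewrite plus_INR; simpl; ring. Qed.

Lemma Icos_ratio_at0 n : Icos n 0 = (INR n + 2) / (INR n + 1) * Icos (n + 2) 0.
Proof.
  pose proof (Icos_rec n 0); pose proof (pos_INR n).
  apply (Rmult_eq_reg_l ((INR n + 3) * (INR n + 1))); [|nra].
  field_simplify; [|lra]. nra.
Qed.

Lemma Icos_ratio_ge n b : 0 <= b ->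
  Icos n b / Icos (n + 2) b >= (INR n + 2) / (INR n + 1) * ratio_root (INR n) b.
Proof.
  intros hb; set (N := INR n); assert (HN : 0 <= N) by apply pos_INR.
  set (h := fun x => Icos n x / Icos (n + 2) x - (N + 2) / (N + 1) * ratio_root N x).
  assert (hderiv : forall x, is_derive h x
     ((x * Icos (n + 2) x / (N + 1) * Icos (n + 2) x
       - Icos n x * (x * Icos (n + 4) x / (N + 3))) / Icos (n + 2) x ^ 2
      - (N + 2) / (N + 1) * (2 * x / ((N + 2) * (N + 4) * (2 * ratio_root N x - 1))))).
  { intros x; apply (is_derive_minus (V := R_NormedModule)).
    - pose proof (is_derive_Icos (n + 2) x) as hB.
      rewrite INR_add_2 in hB; fold N in hB; replace (n + 2 + 2)%nat with (n + 4)%nat in hB by lia.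
      replace (N + 2 + 1) with (N + 3) in hB by ring.
      apply (is_derive_div _ _ _ _ _ (is_derive_Icos n x) hB).
      pose proof (Icos_pos (n + 2) x); lra.
    - apply is_derive_scal, is_derive_ratio_root, HN. }
  assert (h0 : h 0 = 0).
  { unfold h; rewrite ratio_root_0, Icos_ratio_at0 by exact HN.
    fold N; pose proof (Icos_pos (n + 2) 0); field; lra. }
  assert (hcont : forall x, continuity_pt h x).
  { intros x; apply continuity_pt_filterlim.
    apply (ex_derive_continuous (K := R_AbsRing) (V := R_NormedModule)).
    eexists; apply hderiv. }
  assert (hpos : forall x, 0 < x -> h x < 0 -> exists l, is_derive h x l /\ 0 < l).
  { intros x hx hhx; eexists; split; [apply hderiv|].
    apply Rlt_0_minus, ratio_deriv_gt; auto using Icos_pos.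
    - apply Icos_rec.
    - unfold h in hhx; lra. }
  pose proof (nonneg_of_deriv_pos_where_neg h h0 hcont hpos b hb); unfold h in *; lra.
Qed.

Lemma Icos_turan n b : 0 <= b ->
  Icos (n + 4) b * Icos n b
  >= Icos (n + 2) b ^ 2 * ((INR n + 2) * (INR n + 3) / ((INR n + 1) * (INR n + 4))).
Proof.
  intros hb; pose proof (pos_INR n).
  destruct hb as [hb|<-].
  - apply (turan_of_ratio_ge (INR n) b); auto using Icos_pos, Icos_rec.
    apply Rge_le, Icos_ratio_ge; lra.
  - rewrite (Icos_ratio_at0 n).
    pose proof (Icos_ratio_at0 (n + 2)) as hratio.
    rewrite INR_add_2 in hratio; replace (n + 2 + 2)%nat with (n + 4)%nat in hratio by lia.
    pose proof (Icos_pos (n + 4) 0).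
    rewrite hratio; right; field; lra.
Qed.

Lemma Icos_ratio_le n b : 0 <= b ->
  Icos (n + 2) b / Icos (n + 4) b <= (INR n + 4) / (INR n + 3) * ratio_root (INR n) b.
Proof.
  intros hb.
  apply ratio_le_of_turan with (A := Icos n b);
    auto using pos_INR, Icos_pos, Icos_rec, Icos_turan.
Qed.

Definition Icos_prim (p : nat) (b t : R) : R := RInt (cosexp p b) 0 t.

Lemma is_derive_Icos_prim p b t : is_derive (Icos_prim p b) t (cosexp p b t).
Proof.
  apply (is_derive_RInt (V := R_CompleteNormedModule) _ (Icos_prim p b) 0).
  - apply filter_forall; intros; apply (RInt_correct (V := R_CompleteNormedModule)), ex_RInt_cosexp.
  - apply continuous_cosexp.
Qed.

Lemma Icos_prim_sub p b u v : Icos_prim p b u - Icos_prim p b v = RInt (cosexp p b) v u.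
Proof.
  unfold Icos_prim.
  rewrite <- (RInt_Chasles (V := R_CompleteNormedModule) (cosexp p b) 0 v u)
    by apply ex_RInt_cosexp.
  unfold plus; simpl; ring.
Qed.

Lemma abs_cosexp_le p b t : Rabs (cosexp p b t) <= exp (Rabs b).
Proof.
  unfold cosexp; rewrite Rabs_mult, <- RPow_abs, (Rabs_pos_eq (exp _)) by (left; apply exp_pos).
  assert (hcos : Rabs (cos t) ^ p <= 1).
  { rewrite <- (pow1 p); apply pow_incr; split; [apply Rabs_pos|].
    apply Rabs_le, COS_bound. }
  assert (hexp : exp (b * sin t) <= exp (Rabs b)).
  { assert (Rabs (b * sin t) <= Rabs b).
    { rewrite Rabs_mult; pose proof (Rabs_pos b).
      assert (Rabs (sin t) <= 1) by apply Rabs_le, SIN_bound. nra. }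
    pose proof (Rle_abs (b * sin t)).
    destruct (Req_dec (b * sin t) (Rabs b)) as [<-|]; [lra|left; apply exp_increasing; lra]. }
  pose proof (exp_pos (b * sin t)); pose proof (pow_le (Rabs (cos t)) p (Rabs_pos _)); nra.
Qed.

Lemma Icos_prim_lipschitz p b u v :
  Rabs (Icos_prim p b u - Icos_prim p b v) <= exp (Rabs b) * Rabs (u - v).
Proof.
  assert (hordered : forall u v, v <= u ->
    Rabs (Icos_prim p b u - Icos_prim p b v) <= exp (Rabs b) * Rabs (u - v)).
  { intros u' v' hvu; rewrite Icos_prim_sub, (Rabs_pos_eq (u' - v')), Rmult_comm by lra.
    apply (abs_RInt_le_const _ v' u' _ hvu (ex_RInt_cosexp _ _ _ _)).
    intros; apply abs_cosexp_le. }
  destruct (Rle_or_lt v u); [auto|].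
  rewrite Rabs_minus_sym, (Rabs_minus_sym u); apply hordered; lra.
Qed.

(* From [cos z <= 1 - z^2/2 + z^4/24] with [z = PI/2 - asin (1 - e)], [cos z = 1 - e]. *)
Lemma half_pi_sub_asin_sq_le e : 0 < e < 1 ->
  0 <= PI / 2 - asin (1 - e) /\ (PI / 2 - asin (1 - e)) ^ 2 <= 4 * e.
Proof.
  intros he.
  pose proof (asin_bound (1 - e)); pose proof PI_RGT_0; pose proof PI_4.
  assert (hpos : 0 <= asin (1 - e)).
  { destruct (Rle_or_lt 0 (asin (1 - e))) as [|hneg]; [assumption|].
    pose proof (sin_lt_0_var (asin (1 - e)) ltac:(lra) hneg); rewrite sin_asin in *; lra. }
  set (z := PI / 2 - asin (1 - e)).
  assert (hcos : cos z = 1 - e) by (unfold z; rewrite cos_shift, sin_asin; lra).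
  destruct (cos_bound z 0) as [_ hup]; [unfold z; lra | unfold z; lra |].
  unfold cos_approx, cos_term in hup; simpl in hup; rewrite hcos in hup.
  assert (0 <= z <= 2) by (unfold z; lra).
  split; [lra|].
  assert (z * z <= 4) by nra.
  assert (z ^ 4 <= 4 * z ^ 2) by (replace (z ^ 4) with (z ^ 2 * (z * z)) by ring; nra).
  assert (1 - e <= 1 - z ^ 2 / 2 + z ^ 4 / 24) by (eapply Rle_trans; [exact hup | right; field]).
  nra.
Qed.

Lemma Rpower_half_pred p y : 0 < y ->
  Rpower y (IZR (Z.of_nat p - 1) / 2) = sqrt y ^ p / sqrt y.
Proof.
  intros hy; pose proof (sqrt_lt_R0 _ hy).
  rewrite minus_IZR, <- INR_IZR_INZ, <- (Rpower_pow p (sqrt y)), <- (Rpower_sqrt y),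
    Rpower_mult by auto.
  replace (/ 2 * INR p) with ((INR p - 1) / 2 + / 2) by field.
  rewrite Rpower_plus, Rpower_sqrt by auto; field; lra.
Qed.

Lemma J_integrand_asin p b x : -1 < x < 1 ->
  J_integrand (Z.of_nat p - 1) b x = cosexp p b (asin x) / sqrt (1 - x ^ 2).
Proof.
  intros hx; unfold J_integrand, cosexp.
  rewrite cos_asin, sin_asin, Rpower_half_pred by (unfold Rsqr; nra).
  unfold Rsqr; replace (x * x) with (x ^ 2) by ring; unfold Rdiv; ring.
Qed.

Lemma is_derive_Icos_prim_asin p b x : -1 < x < 1 ->
  is_derive (fun x => Icos_prim p b (asin x)) x (J_integrand (Z.of_nat p - 1) b x).
Proof.
  intros hx.
  assert (hasin : is_derive asin x (1 / sqrt (1 - x²))).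
  { apply is_derive_Reals, (derive_pt_eq_1 _ _ _ (derivable_pt_asin x hx)), derive_pt_asin. }
  pose proof (is_derive_comp _ _ _ _ _ (is_derive_Icos_prim p b (asin x)) hasin) as hcomp.
  rewrite J_integrand_asin by exact hx.
  replace (x ^ 2) with x² by (unfold Rsqr; ring).
  replace (cosexp p b (asin x) / sqrt (1 - x²)) with (scal (1 / sqrt (1 - x²)) (cosexp p b (asin x))).
  { exact hcomp. }
  unfold scal; simpl; unfold mult; simpl; unfold Rdiv; ring.
Qed.

Lemma continuous_J_integrand k b x : -1 < x < 1 -> continuous (J_integrand k b) x.
Proof.
  intros hx; apply (ex_derive_continuous (K := R_AbsRing) (V := R_NormedModule)).
  unfold J_integrand, Rpower; auto_derive; nra.
Qed.

Definition Icos_trunc (p : nat) (b e : R) : R :=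
  Icos_prim p b (asin (1 - e)) - Icos_prim p b (asin (-1 + e)).

Lemma RiemannInt_J_integrand p b e : 0 < e < 1 ->
  exists pr : Riemann_integrable (J_integrand (Z.of_nat p - 1) b) (-1 + e) (1 - e),
    RiemannInt pr = Icos_trunc p b e.
Proof.
  intros he.
  assert (hint : is_RInt (J_integrand (Z.of_nat p - 1) b) (-1 + e) (1 - e)
                   (minus (Icos_prim p b (asin (1 - e))) (Icos_prim p b (asin (-1 + e))))).
  { apply (is_RInt_derive (V := R_CompleteNormedModule) (fun x => Icos_prim p b (asin x)));
      intros x hx; revert hx; unfold Rmin, Rmax; destruct Rle_dec; intros.
    all: first [apply is_derive_Icos_prim_asin | apply continuous_J_integrand]; lra. }
  exists (ex_RInt_Reals_0 _ _ _ (ex_intro _ _ hint)).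
  rewrite <- RInt_Reals, (is_RInt_unique _ _ _ _ hint); reflexivity.
Qed.

Lemma Icos_trunc_dist p b e : 0 < e < 1 ->
  Rabs (Icos_trunc p b e - Icos p b) <= 2 * exp (Rabs b) * (PI / 2 - asin (1 - e)).
Proof.
  intros he; destruct (half_pi_sub_asin_sq_le e he) as [hz _].
  unfold Icos_trunc; replace (-1 + e) with (- (1 - e)) by ring.
  rewrite asin_opp.
  replace (Icos p b) with (Icos_prim p b (PI / 2) - Icos_prim p b (- (PI / 2)))
    by (rewrite Icos_prim_sub; reflexivity).
  pose proof (Icos_prim_lipschitz p b (asin (1 - e)) (PI / 2)) as hright.
  pose proof (Icos_prim_lipschitz p b (- asin (1 - e)) (- (PI / 2))) as hleft.
  rewrite (Rabs_minus_sym (asin (1 - e))), (Rabs_pos_eq (PI / 2 - _)) in hright by lra.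
  replace (- asin (1 - e) - - (PI / 2)) with (PI / 2 - asin (1 - e)) in hleft by ring.
  rewrite (Rabs_pos_eq (PI / 2 - _)) in hleft by lra.
  set (G := Icos_prim p b) in *; set (u := asin (1 - e)) in *.
  replace (G u - G (- u) - (G (PI / 2) - G (- (PI / 2))))
    with ((G u - G (PI / 2)) + - (G (- u) - G (- (PI / 2)))) by ring.
  eapply Rle_trans; [apply Rabs_triang|]; rewrite Rabs_Ropp; lra.
Qed.

Lemma limit_Icos_trunc p b : limit1_in (Icos_trunc p b) (fun e => 0 < e < 1) (Icos p b) 0.
Proof.
  intros eps heps; simpl; unfold R_dist.
  set (M := exp (Rabs b)); assert (hM : 0 < M) by apply exp_pos.
  exists (Rmin 1 (eps ^ 2 / (16 * M ^ 2 + 1))); split.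
  { apply Rmin_pos; [lra|]; apply Rdiv_lt_0_compat; nra. }
  intros e [he hdist].
  rewrite Rminus_0_r, Rabs_pos_eq in hdist by lra.
  assert (hsmall : 16 * M ^ 2 * e < eps ^ 2).
  { pose proof (Rmin_r 1 (eps ^ 2 / (16 * M ^ 2 + 1))).
    assert (eps ^ 2 / (16 * M ^ 2 + 1) * (16 * M ^ 2 + 1) = eps ^ 2) by (field; nra).
    nra. }
  destruct (half_pi_sub_asin_sq_le e he) as [hz hz2].
  pose proof (Icos_trunc_dist p b e he) as htrunc; fold M in htrunc.
  assert ((2 * M * (PI / 2 - asin (1 - e))) ^ 2 < eps ^ 2) by nra.
  assert (2 * M * (PI / 2 - asin (1 - e)) < eps) by nra.
  lra.
Qed.

Lemma improper_int_Icos p b :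
  improper_int_m1_1 (J_integrand (Z.of_nat p - 1) b) (Icos p b).
Proof.
  exists (Icos_trunc p b); split; [apply RiemannInt_J_integrand | apply limit_Icos_trunc].
Qed.

Lemma J_Icos p b : J (Z.of_nat p - 1) b = Icos p b.
Proof.
  set (k := (Z.of_nat p - 1)%Z).
  assert (hJ : improper_int_m1_1 (J_integrand k b) (J k b)).
  { apply (epsilon_spec (inhabits 0) (fun L => improper_int_m1_1 (J_integrand k b) L)).
    exists (Icos p b); apply improper_int_Icos. }
  destruct hJ as [F [hF hlim]].
  assert (hFeq : forall e, 0 < e < 1 -> F e = Icos_trunc p b e).
  { intros e he; destruct (hF e he) as [pr1 <-].
    destruct (RiemannInt_J_integrand p b e he) as [pr2 <-]; apply RiemannInt_P5. }
  apply (single_limit (Icos_trunc p b) (fun e => 0 < e < 1) _ _ 0);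
    [| | apply limit_Icos_trunc].
  - intros alp halp; exists (Rmin (alp / 2) (1 / 2)).
    pose proof (Rmin_l (alp / 2) (1 / 2)); pose proof (Rmin_r (alp / 2) (1 / 2)).
    assert (0 < Rmin (alp / 2) (1 / 2)) by (apply Rmin_pos; lra).
    split; [lra|]; simpl; unfold R_dist; rewrite Rminus_0_r, Rabs_pos_eq; lra.
  - intros eps heps; destruct (hlim eps heps) as [a [ha hx]].
    exists a; split; [exact ha|]; intros x hxa; rewrite <- hFeq by apply hxa; apply hx, hxa.
Qed.

Theorem lemma2 (d : nat) (b : R) (hd : (2 <= d)%nat) (hb : 0 <= b) :
  let Jm3 := J (Z.of_nat d - 3) b in
  let Jm1 := J (Z.of_nat d - 1) b in
  let Jp1 := J (Z.of_nat d + 1) b in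
  let D := INR d in
  let s := / 2 + sqrt (/ 4 + b ^ 2 / (D * (D + 2))) in
  (b ^ 2 * Jp1 = - (D * (D + 1)) * Jm1 + (D + 1) * (D - 1) * Jm3)
  /\ Jm3 / Jm1 >= D / (D - 1) * s
  /\ Jm1 / Jp1 <= (D + 2) / (D + 1) * s
  /\ Jp1 * Jm3 >= Jm1 ^ 2 * (D * (D + 1) / ((D - 1) * (D + 2))).
Proof.
  replace d with (d - 2 + 2)%nat by lia; set (n := (d - 2)%nat).
  intros Jm3 Jm1 Jp1 D s.
  assert (hJm3 : Jm3 = Icos n b).
  { unfold Jm3; rewrite <- J_Icos; f_equal; lia. }
  assert (hJm1 : Jm1 = Icos (n + 2) b) by apply J_Icos.
  assert (hJp1 : Jp1 = Icos (n + 4) b).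
  { unfold Jp1; rewrite <- J_Icos; f_equal; lia. }
  assert (hs : s = ratio_root (INR n) b).
  { unfold s, D, ratio_root; rewrite INR_add_2.
    replace (INR n + 2 + 2) with (INR n + 4) by ring; reflexivity. }
  assert (hD : D = INR n + 2) by apply INR_add_2.
  clearbody Jm3 Jm1 Jp1 D s; subst.
  replace (INR n + 2 + 1) with (INR n + 3) by ring.
  replace (INR n + 2 + 2) with (INR n + 4) by ring.
  replace (INR n + 2 - 1) with (INR n + 1) by ring.
  split; [apply Icos_rec|].
  split; [apply Icos_ratio_ge, hb|].
  split; [apply Icos_ratio_le, hb | apply Icos_turan, hb].
Qed.
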